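(* Every $L\in\mathcal L(C_6)$ which is an arithmetical multiprogression with difference $4$ and period $\{0,1,4\}$ lies in $\mathcal L(C_2^5)$.
   Context: $C_n$ denotes a cyclic group of order $n$ and $C_2^r$ an elementary abelian $2$-group of rank $r$; $[a,b]=\{x\in\mathbb Z:a\le x\le b\}$. For a subset $G_0$ of a finite abelian group $G$, a sequence over $G_0$ is an element of the free abelian monoid $\mathcal F(G_0)$ with basis $G_0$ (a finite unordered list of elements of $G_0$, repetitions allowed). $\mathcal B(G_0)$ is the monoid of zero-sum sequences over $G_0$ (including the empty sequence). An atom is a minimal zero-sum sequence, i.e. a nonempty zero-sum sequence that is not a product of two nonempty zero-sum sequences. For $B\in\mathcal B(G_0)$, $\mathsf L(B)=\{k\in\mathbb N_0: B \text{ is a product of } k \text{ atoms}\}$, and $\mathcal L(G_0)=\{\mathsf L(B):B\in\mathcal B(G_0)\}$; $\mathcal L(G)$ is the case $G_0=G$. Arithmetical multiprogression (AMP): for $d\in\mathbb N$ and $\{0,d\}\subset\mathcal D\subset[0,d]$, a set $L\subset\mathbb Z$ is an AMP with difference $d$ and period $\mathcal D$ if $L$ is finite, nonempty, and $L=(\min L+\mathcal D+d\mathbb Z)\cap[\min L,\max L]$. *)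

From HB Require Import structures.
From mathcomp Require Import all_boot all_order all_algebra.
Set Implicit Arguments. Unset Strict Implicit. Unset Printing Implicit Defensive.
Import GRing.Theory.
Local Open Scope ring_scope.

(* Sequences over a finite abelian group G (written additively): elements of
   the free abelian monoid F(G), represented by multiplicity functions. *)
Definition fseq (G : finZmodType) := {ffun G -> nat}.

Definition seq_mul (G : finZmodType) (S T : fseq G) : fseq G :=
  [ffun g => (S g + T g)%N].

Definition seq_prod (G : finZmodType) (s : seq (fseq G)) : fseq G :=
  [ffun g => (\sum_(A <- s) A g)%N].

Definition seq_len (G : finZmodType) (S : fseq G) : nat := (\sum_(g : G) S g)%N.

Definition zero_sum (G : finZmodType) (S : fseq G) : Prop :=
  \sum_(g : G) g *+ S g = 0.

Definition atom (G : finZmodType) (A : fseq G) : Prop :=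
  zero_sum A /\ (0 < seq_len A)%N /\
  ~ (exists U V : fseq G, [/\ zero_sum U, zero_sum V, (0 < seq_len U)%N,
       (0 < seq_len V)%N & A = seq_mul U V]).

Definition in_lengths (G : finZmodType) (B : fseq G) (k : nat) : Prop :=
  exists s : seq (fseq G), [/\ size s = k, (forall A, A \in s -> atom A) &
                               B = seq_prod s].

Definition in_system_of_sets (G : finZmodType) (L : nat -> Prop) : Prop :=
  exists B : fseq G, zero_sum B /\ forall k, L k <-> in_lengths B k.

(* L is an AMP with difference d and period D
   (d \in N, {0,d} \subset D \subset [0,d]); L finite nonempty with min m and
   max M, and L = (m + D + dZ) \cap [m, M]. For naturals x >= m,
   x \in m + delta + dZ iff x = m + delta (mod d). *)
Definition is_AMP (d : nat) (D : pred nat) (L : nat -> Prop) : Prop :=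
  [/\ (0 < d)%N, 0%N \in D, d \in D, (forall x, x \in D -> x <= d)%N &
   exists m M : nat,
     [/\ L m, L M, (forall x, L x -> m <= x <= M)%N &
       forall x, L x <-> ((m <= x <= M)%N /\
                          exists2 delta, delta \in D & x = (m + delta)%N %[mod d])]].

From HB Require Import structures.
From mathcomp Require Import all_boot all_order all_algebra.
From mathcomp Require Import zify.
Set Implicit Arguments. Unset Strict Implicit. Unset Printing Implicit Defensive.
Import GRing.Theory.

(* Write L = L(B) with B over C_6, and let m, M be its minimum and maximum, so that
   L = {x in [m, M] : x - m = 0, 1 mod 4}.
   - If m = 0, B is empty and L = {0}, the set of lengths of the empty sequence.
   - If m > 0, a length argument over C_6 gives M = m or M + 1 < 3m: no B over C_6
     has factorizations of lengths m, m + 1 and M >= 3m - 1.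
   - Over C_2^5 the sequence B(z, k) = 0^z e_0^k e_1^(k+1) e_2^(k+1) e_3^k e_4^k
     e_5^k (e_1 + e_2), with e_0 = e_1 + ... + e_5, has the lengths
     {x in [n, n + 2k] : x - n = 0, 1 mod 4}, n = z + k + 1. Taking k = (M-m+1)/2
     and z = m - k - 1 (legitimate by the bound) yields exactly L.
   Both length computations work with multiplicity vectors over a finite list X of
   group elements: a factorization of a sequence supported on X is a nonnegative
   combination of the atoms supported on X, so its lengths are governed by linear
   arithmetic once those atoms are listed. The lists are certified by computation:
   atoms are the nonempty zero-sum vectors without nonempty zero-sum proper
   subvector, and all candidates lie in an explicit box. *)

Section Factorizations.
Variable G : finZmodType.
Implicit Types (A B U V : fseq G) (s : seq (fseq G)).

Lemma sigma_mul U V :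
  (\sum_(g : G) g *+ seq_mul U V g =
   \sum_(g : G) g *+ U g + \sum_(g : G) g *+ V g)%R.
Proof. by rewrite -big_split; apply: eq_bigr => g _; rewrite ffunE mulrnDr. Qed.

Lemma len_mul U V : seq_len (seq_mul U V) = seq_len U + seq_len V.
Proof. by rewrite /seq_len -big_split; apply: eq_bigr => g _; rewrite ffunE. Qed.

Lemma seq_prod_cons A s : seq_prod (A :: s) = seq_mul A (seq_prod s).
Proof. by apply/ffunP => g; rewrite !ffunE big_cons. Qed.

Lemma prod_ge s A g : A \in s -> A g <= seq_prod s g.
Proof. by move=> As; rewrite ffunE (big_rem A) //= leq_addr. Qed.

Lemma zero_sum_prod s : (forall A, A \in s -> atom A) -> zero_sum (seq_prod s).
Proof.
elim: s => [|A s IH] atoms.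
  by rewrite /zero_sum big1 // => g _; rewrite ffunE big_nil.
have [zA _] := atoms A (mem_head A s).
rewrite seq_prod_cons /zero_sum sigma_mul zA add0r IH // => B Bs.
by apply: atoms; rewrite inE Bs orbT.
Qed.

Lemma atom_sub A U : atom A -> (forall g, U g <= A g) -> zero_sum U ->
  0 < seq_len U -> seq_len U = seq_len A.
Proof.
move=> [zA [_ indec]] UA zU lenU.
pose V := [ffun g => A g - U g].
have AUV : A = seq_mul U V by apply/ffunP => g; rewrite !ffunE subnKC.
have zV : zero_sum V by move: zA; rewrite /zero_sum AUV sigma_mul zU add0r.
have [lenV0|lenV] := posnP (seq_len V).
  by rewrite AUV len_mul lenV0 addn0.
by case: indec; exists U, V.
Qed.

Lemma in_lengths_zero_sum B k : in_lengths B k -> zero_sum B.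
Proof. by case=> s [_ atoms ->]; apply: zero_sum_prod. Qed.

(* If the empty factorization factors B then B is empty, so L(B) = {0}. *)
Lemma in_lengths0 B k : in_lengths B 0 -> in_lengths B k -> k = 0.
Proof.
case=> s0 [/size0nil -> _ B0] [[|A s] [<- // atoms BAs]].
have [_ [lenA _]] := atoms A (mem_head A s).
suff : seq_len A = 0 by move=> A0; rewrite A0 in lenA.
apply: big1 => g _; apply/eqP; rewrite -leqn0.
by have := prod_ge g (mem_head A s); rewrite -BAs B0 ffunE big_nil.
Qed.

Lemma lengths_empty k : in_lengths (seq_prod [::] : fseq G) k <-> k = 0.
Proof.
have L0 : in_lengths (seq_prod [::] : fseq G) 0 by exists [::].
by split=> [/(in_lengths0 L0) | ->].
Qed.

Lemma system_of_lengths B (L : nat -> Prop) x :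
  L x -> (forall k, L k <-> in_lengths B k) -> in_system_of_sets G L.
Proof. by move=> Lx LB; exists B; split=> //; apply: in_lengths_zero_sum ((LB x).1 Lx). Qed.

End Factorizations.

Lemma all2_leqP (u v : seq nat) :
  reflect (size u = size v /\ forall j, nth 0 u j <= nth 0 v j) (all2 leq u v).
Proof.
elim: u v => [|i u IH] [|j v] /=.
- by constructor; split=> // j; rewrite nth_nil.
- by constructor; case.
- by constructor; case.
apply: (iffP andP) => [[ij /IH [uv le_uv]] | [[uv] le_uv]].
  by split=> [|[|n]] /=; rewrite ?uv ?le_uv.
by split; [apply: (le_uv 0) | apply/IH; split=> // n; apply: (le_uv n.+1)].
Qed.

Lemma leq_sumn (u v : seq nat) : all2 leq u v -> sumn u <= sumn v.
Proof. by elim: u v => [|i u IH] [|j v] //= /andP[ij /IH]; apply: leq_add. Qed.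

Lemma all2_leq_sumn_eq (u v : seq nat) : all2 leq u v -> sumn u = sumn v -> u = v.
Proof.
elim: u v => [|i u IH] [|j v] //= /andP[ij uv] e.
have le_uv := leq_sumn uv; have eij : i = j by lia.
by rewrite eij (IH v) //; lia.
Qed.

Fixpoint box (bs : seq nat) : seq (seq nat) :=
  if bs is b :: bs' then [seq i :: w | i <- iota 0 b.+1, w <- box bs'] else [:: [::]].
Arguments box : simpl never.

Lemma mem_box bs v : (v \in box bs) = all2 leq v bs.
Proof.
elim: bs v => [|b bs IH] v; first by case: v.
apply/allpairsP/idP => [[[i w] [ib wbs ->]] | ].
  by rewrite mem_iota in ib; rewrite IH in wbs; apply/andP.
case: v => [//|i w] /andP[ib wbs].
by exists (i, w); split; rewrite ?mem_iota ?IH.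
Qed.

(* The combination sum_i c_i a_i of the vectors a_i listed in atl, cut to length n,
   and its total weight sum_i c_i. *)
Definition lincomb (atl : seq (seq nat)) (c : nat -> nat) (n : nat) : seq nat :=
  [seq sumn [seq c i * nth 0 (nth [::] atl i) j | i <- iota 0 (size atl)] | j <- iota 0 n].

Definition total (atl : seq (seq nat)) (c : nat -> nat) : nat :=
  sumn [seq c i | i <- iota 0 (size atl)].

Lemma size_lincomb atl c n : size (lincomb atl c n) = n.
Proof. by rewrite size_map size_iota. Qed.

Lemma nth_lincomb atl c n j : j < n ->
  nth 0 (lincomb atl c n) j =
  sumn [seq c i * nth 0 (nth [::] atl i) j | i <- iota 0 (size atl)].
Proof. by move=> jn; rewrite (nth_map 0) ?size_iota // nth_iota. Qed.

Lemma sum_by_index (T : Type) (s : seq T) (idx : T -> nat) n (F : nat -> nat) :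
  all (fun A => idx A < n) s ->
  \sum_(A <- s) F (idx A) = sumn [seq count (fun A => idx A == i) s * F i | i <- iota 0 n].
Proof.
elim: s => [|A s IH] /=.
  by rewrite big_nil sumnE big_map big1.
case/andP=> An sn; rewrite big_cons IH // !sumnE !big_map.
under [RHS]eq_bigr => i _ do rewrite mulnDl.
rewrite big_split /=; congr (_ + _).
rewrite (bigD1_seq (idx A)) ?iota_uniq ?mem_iota //= eqxx mul1n big1_seq ?addn0 //.
by move=> i /andP[iA _]; rewrite eq_sym (negbTE iA).
Qed.

Section Coordinates.
Variable G : finZmodType.
Variable X : seq G.
Hypothesis X_uniq : uniq X.
Implicit Types (A B U V : fseq G) (s : seq (fseq G)) (u v : seq nat).

(* Sequences supported on X correspond to multiplicity vectors indexed by X. *)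
Definition mk v : fseq G :=
  [ffun g => if g \in X then nth 0 v (index g X) else 0].
Definition vec A : seq nat := [seq A x | x <- X].
Definition supported A : Prop := forall g, g \notin X -> A g = 0.

Lemma mk_nth v j : j < size X -> mk v (nth 0%R X j) = nth 0 v j.
Proof. by move=> jX; rewrite ffunE mem_nth // index_uniq. Qed.

Lemma mk_supported v : supported (mk v).
Proof. by move=> g gX; rewrite ffunE (negbTE gX). Qed.

Lemma size_vec A : size (vec A) = size X.
Proof. exact: size_map. Qed.

Lemma vec_nth A j : j < size X -> nth 0 (vec A) j = A (nth 0%R X j).
Proof. exact: nth_map. Qed.

Lemma vecK A : supported A -> mk (vec A) = A.
Proof.
move=> suppA; apply/ffunP => g; rewrite ffunE.
case: ifPn => [gX | /suppA //]; by rewrite vec_nth ?index_mem // nth_index.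
Qed.

Lemma mkK v : size v = size X -> vec (mk v) = v.
Proof.
move=> sv; apply: (@eq_from_nth _ 0); rewrite size_vec // => j jX.
by rewrite vec_nth // mk_nth.
Qed.

Lemma big_supported (R : Type) (idx : R) (op : Monoid.com_law idx) (F : G -> R) :
  (forall g, g \notin X -> F g = idx) ->
  \big[op/idx]_(g : G) F g = \big[op/idx]_(j < size X) F (nth 0%R X j).
Proof.
move=> F0; rewrite (bigID (mem X)) /= [X in op _ X]big1 ?Monoid.mulm1.
  by rewrite -big_uniq // (big_nth 0%R) big_mkord.
by move=> g /F0.
Qed.

Lemma zero_sum_mk v :
  zero_sum (mk v) <-> (\sum_(j < size X) nth 0%R X j *+ nth 0 v j = 0)%R.
Proof.
rewrite /zero_sum big_supported => [|g /mk_supported -> //].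
by under eq_bigr => j _ do rewrite mk_nth //.
Qed.

Lemma len_mk v : size v = size X -> seq_len (mk v) = sumn v.
Proof.
move=> sv; rewrite /seq_len big_supported => [|g /mk_supported //].
under eq_bigr => j _ do rewrite mk_nth //.
by rewrite sumnE (big_nth 0) big_mkord sv.
Qed.

Lemma prod_lincomb (atl : seq (seq nat)) c :
  seq_prod (flatten [seq nseq (c i) (mk (nth [::] atl i)) | i <- iota 0 (size atl)])
  = mk (lincomb atl c (size X)).
Proof.
apply/ffunP => g; rewrite ffunE big_flatten big_map /=.
have [gX | gX] := boolP (g \in X); last first.
  rewrite mk_supported // big1_seq // => i _.
  by rewrite big_nseq iter_addn_0 mk_supported.
rewrite -(nth_index 0%R gX) mk_nth ?index_mem // nth_lincomb ?index_mem //.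
rewrite sumnE big_map; apply: eq_bigr => i _.
by rewrite big_nseq iter_addn_0 mk_nth ?index_mem // mulnC.
Qed.

Lemma lincomb_lengths (atl : seq (seq nat)) c : (forall a, a \in atl -> atom (mk a)) ->
  in_lengths (mk (lincomb atl c (size X))) (total atl c).
Proof.
move=> atoms; rewrite -prod_lincomb; eexists; split; last reflexivity.
  by rewrite size_flatten /shape -map_comp (eq_map (fun i => size_nseq _ _)).
move=> A /flattenP [As /mapP [i iatl ->]] /nseqP [-> _].
by apply/atoms/mem_nth; rewrite mem_iota in iatl.
Qed.

(* Conversely, if every atom supported on X is listed, each factorization of a
   sequence B supported on X counts listed atoms: B is a combination of them with
   total weight the length of the factorization. *)
Lemma lengths_lincomb (atl : seq (seq nat)) B n :
  (forall A, atom A -> supported A -> vec A \in atl) -> supported B ->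
  in_lengths B n -> exists c, n = total atl c /\ vec B = lincomb atl c (size X).
Proof.
move=> listed suppB [s [<- atoms eB]]; rewrite eB in suppB *.
have vec_s A : A \in s -> vec A \in atl.
  move=> As; apply: listed (atoms A As) _ => g gX.
  by apply/eqP; rewrite -leqn0 -(suppB g gX) prod_ge.
pose idx A := index (vec A) atl.
have idx_lt : all (fun A => idx A < size atl) s.
  by apply/allP => A /vec_s; rewrite index_mem.
exists (fun i => count (fun A => idx A == i) s); split.
  rewrite -sum1_size (sum_by_index (fun _ => 1) idx_lt).
  by rewrite /total; congr sumn; apply: eq_map => i; rewrite muln1.
apply: (@eq_from_nth _ 0); rewrite ?size_vec ?size_lincomb // => j jX.
rewrite vec_nth // nth_lincomb // ffunE.
rewrite -(sum_by_index (fun i => nth 0 (nth [::] atl i) j) idx_lt).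
by apply: eq_big_seq => A As; rewrite /idx nth_index ?vec_s // vec_nth.
Qed.

Variable zsb : seq nat -> bool.
Hypothesis zsbP : forall v, size v = size X -> zero_sum (mk v) <-> zsb v.

Lemma atom_minimal v u : size v = size X -> atom (mk v) ->
  all2 leq u v -> zsb u -> 0 < sumn u -> u = v.
Proof.
move=> sv Av uv zu u_gt0.
have [su le_uv] := all2_leqP _ _ uv; rewrite sv in su.
apply: all2_leq_sumn_eq uv _; rewrite -(len_mk su) -(len_mk sv).
apply: atom_sub Av _ _ _.
- move=> g; have [gX | gX] := boolP (g \in X); last by rewrite !mk_supported.
  by rewrite -(nth_index 0%R gX) !mk_nth ?index_mem.
- exact/zsbP.
- by rewrite len_mk.
Qed.

Definition unit_vec j b : seq nat := set_nth 0 (nseq (size X) 0) j b.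

Lemma nth_unit_vec j b i : nth 0 (unit_vec j b) i = if i == j then b else 0.
Proof. by rewrite nth_set_nth /= nth_nseq if_same. Qed.

Lemma sumn_unit_vec j b : j < size X -> sumn (unit_vec j b) = b.
Proof.
rewrite /unit_vec; elim: (size X) j => [|n IH] [|j] //= jn.
  by rewrite sumn_nseq mul0n addn0.
by rewrite IH.
Qed.

Lemma atom_coord_bound v j b : size v = size X -> atom (mk v) -> j < size X ->
  0 < b -> zsb (unit_vec j b) -> nth 0 v j <= b.
Proof.
move=> sv Av jX b_gt0 zb; rewrite leqNgt; apply/negP => b_lt_vj.
have below : all2 leq (unit_vec j b) v.
  apply/all2_leqP; split=> [|i].
    by rewrite size_set_nth size_nseq sv; apply/maxn_idPr.
  by rewrite nth_unit_vec; case: eqP => [-> | _]; first exact: ltnW.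
have := atom_minimal sv Av below zb; rewrite sumn_unit_vec // => /(_ b_gt0).
by move/(congr1 (nth 0 ^~ j)); rewrite nth_unit_vec eqxx => vj; rewrite -vj ltnn in b_lt_vj.
Qed.

(* Certificate that atl lists all atoms supported on X: each b_j e_j is a nonempty
   zero-sum vector, so atoms lie below bs; each nonempty zero-sum vector below bs
   dominates a listed nonempty zero-sum vector, equal to it if it is an atom. *)
Definition covers (atl : seq (seq nat)) (bs : seq nat) : bool :=
  [&& size bs == size X,
      all (fun j => (0 < nth 0 bs j) && zsb (unit_vec j (nth 0 bs j))) (iota 0 (size X)),
      all (fun a => zsb a && (0 < sumn a)) atl &
      all (fun v => ~~ zsb v || (sumn v == 0) || has (fun a => all2 leq a v) atl) (box bs)].

Lemma covers_atoms atl bs : covers atl bs ->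
  forall A, atom A -> supported A -> vec A \in atl.
Proof.
case/and4P => /eqP sbs /allP units /allP listed_zs /allP cover A atomA suppA.
set v := vec A; have sv : size v = size X := size_vec A.
rewrite -(vecK suppA) -/v in atomA.
have v_bs : all2 leq v bs.
  apply/all2_leqP; split=> [|j]; first by rewrite sv sbs.
  have [jX | jX] := ltnP j (size X); last by rewrite nth_default ?sv.
  have /andP[bj_gt0 zbj] : (0 < nth 0 bs j) && zsb (unit_vec j (nth 0 bs j)).
    by apply: units; rewrite mem_iota.
  exact: atom_coord_bound.
have := cover v; rewrite mem_box v_bs => /(_ isT) /orP[/orP[] | /hasP[a al av]].
- by case: atomA => /(zsbP sv) ->.
- by case: atomA => _ []; rewrite len_mk // => /lt0n_neq0/negbTE ->.
- case/andP: (listed_zs a al) => za a_gt0.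
  by rewrite -(atom_minimal sv atomA av za a_gt0).
Qed.

Definition atomic_list (atl : seq (seq nat)) : bool :=
  all (fun a => [&& size a == size X, zsb a, 0 < sumn a &
                 all (fun u => ~~ zsb u || (sumn u == 0) || (u == a)) (box a)]) atl.

Lemma atomic_listP atl : atomic_list atl -> forall a, a \in atl -> atom (mk a).
Proof.
move/allP=> ok a /ok /and4P [/eqP sa za a_gt0 /allP minimal].
split; first exact/zsbP.
split; first by rewrite len_mk.
case=> U [V [zU zV U_gt0 V_gt0 aUV]].
have UA g : U g <= mk a g by rewrite aUV ffunE leq_addr.
have suppU : supported U.
  by move=> g gX; apply/eqP; rewrite -leqn0 -(mk_supported a gX).
set u := vec U; have su : size u = size X := size_vec U.
have ua : u \in box a.
  rewrite mem_box; apply/all2_leqP; split=> [|j]; first by rewrite su sa.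
  have [jX | jX] := ltnP j (size X); last by rewrite nth_default ?su.
  by rewrite vec_nth // -(mk_nth a jX) UA.
have zu : zsb u by apply/zsbP => //; rewrite vecK.
have len_u : sumn u = seq_len U by rewrite -len_mk ?vecK.
have := minimal u ua; rewrite zu len_u (negbTE (lt0n_neq0 U_gt0)) /= => /eqP ua_eq.
by have := congr1 (@seq_len G) aUV; rewrite len_mul len_mk // -ua_eq len_u; lia.
Qed.

End Coordinates.

Lemma Zp_nat_eq0 p n : 1 < p -> (n%:R : 'Z_p)%R = 0%R <-> n %% p = 0.
Proof.
move=> p_gt1; split=> [/(congr1 val) | n0]; first by rewrite /= val_Zp_nat.
by apply: val_inj; rewrite /= val_Zp_nat.
Qed.

Definition X6 : seq 'Z_6 := [seq (i%:R)%R | i <- iota 0 6].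

Lemma uniq_X6 : uniq X6.
Proof.
apply: (@map_uniq _ _ val); rewrite -map_comp.
by rewrite (eq_map (fun i => val_Zp_nat _ i)).
Qed.

Lemma mem_X6 (g : 'Z_6) : g \in X6.
Proof. by apply/mapP; exists (val g); rewrite ?natr_Zp // mem_iota; case: g. Qed.

Definition zsb6 (v : seq nat) : bool :=
  sumn [seq i * nth 0 v i | i <- iota 0 6] %% 6 == 0.

Lemma zsb6P v : size v = size X6 -> zero_sum (mk X6 v) <-> zsb6 v.
Proof.
move=> _; rewrite (zero_sum_mk uniq_X6) /zsb6.
have -> : (\sum_(j < size X6) nth 0%R X6 j *+ nth 0 v j)%R =
          ((sumn [seq i * nth 0 v i | i <- iota 0 6])%:R)%R.
  rewrite sumnE big_map -[iota 0 6]/(index_iota 0 6) big_mkord natr_sum.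
  apply: eq_bigr => j _; have j_lt6 : j < 6 := ltn_ord j.
  by rewrite (nth_map 0) ?nth_iota ?size_iota // natrM mulr_natr.
by rewrite Zp_nat_eq0 //; split=> [-> | /eqP].
Qed.

(* The atoms over C_6 as multiplicity vectors over X6; only the completeness of the
   list is needed, and covers6 certifies it. *)
Definition atoms6 : seq (seq nat) :=
 [:: [::1;0;0;0;0;0]; [::0;0;0;0;0;6]; [::0;0;0;0;1;4]; [::0;0;0;0;2;2]; [::0;0;0;0;3;0];
     [::0;0;0;1;0;3]; [::0;0;0;1;1;1]; [::0;0;0;2;0;0]; [::0;0;1;0;0;2]; [::0;0;1;0;1;0];
     [::0;0;2;1;0;1]; [::0;0;3;0;0;0]; [::0;1;0;0;0;1]; [::0;1;0;1;2;0]; [::0;1;1;1;0;0];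
     [::0;2;0;0;1;0]; [::0;2;2;0;0;0]; [::0;3;0;1;0;0]; [::0;4;1;0;0;0]; [::0;6;0;0;0;0]].

Lemma covers6 : covers X6 zsb6 atoms6 [:: 1; 6; 3; 2; 3; 6].
Proof. by vm_compute. Qed.

Lemma lengths_C6 (B : fseq 'Z_6) n : in_lengths B n ->
  exists c, n = total atoms6 c /\ vec X6 B = lincomb atoms6 c 6.
Proof.
apply: (lengths_lincomb (covers_atoms uniq_X6 zsb6P covers6)).
by move=> g; rewrite mem_X6.
Qed.

(* Over C_6, lengths m > 0, m + 1 and M of one sequence force M + 1 < 3m: the three
   factorizations are combinations of listed atoms with the same multiplicity vector,
   and the resulting linear system has no solution in naturals with 3m <= M + 1. *)
Lemma C6_length_bound (B : fseq 'Z_6) m M :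
  in_lengths B m -> in_lengths B m.+1 -> in_lengths B M -> 0 < m -> M.+1 < 3 * m.
Proof.
move=> /lengths_C6 [c1 [-> e1]] /lengths_C6 [c2 [n2 e2]] /lengths_C6 [c3 [-> e3]].
rewrite e1 in e2 e3; move: n2 e2 e3; rewrite /total /lincomb /=.
by move=> ? [] ? ? ? ? ? ? [] ? ? ? ? ? ?; lia.
Qed.

(* C_2^5, listed as X2 = (0, e_0, e_1, ..., e_5, e_1 + e_2) where e_1, ..., e_5 is the
   standard basis and e_0 = e_1 + ... + e_5; coords2 gives their coordinates. *)
Definition coords2 : seq (seq nat) :=
  [:: [::0;0;0;0;0]; [::1;1;1;1;1]; [::1;0;0;0;0]; [::0;1;0;0;0];
      [::0;0;1;0;0]; [::0;0;0;1;0]; [::0;0;0;0;1]; [::1;1;0;0;0]].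
Definition row_of (bs : seq nat) : 'rV['Z_2]_5 := (\row_(t < 5) (nth 0 bs t)%:R)%R.
Definition X2 : seq 'rV['Z_2]_5 := [seq row_of bs | bs <- coords2].

Lemma uniq_X2 : uniq X2.
Proof.
pose bits (x : 'rV['Z_2]_5) := [seq val (x 0%R (inord t)) | t <- iota 0 5].
apply: (@map_uniq _ _ bits); rewrite -map_comp.
rewrite (eq_map (g := fun bs => [seq nth 0 bs t %% 2 | t <- iota 0 5])); first by [].
move=> bs; apply/eq_in_map => t; rewrite mem_iota => /andP[_ t5].
by rewrite /= mxE val_Zp_nat // inordK.
Qed.

Definition zsb2 (v : seq nat) : bool :=
  all (fun t => ~~ odd (sumn [seq nth 0 (nth [::] coords2 j) t * nth 0 v j | j <- iota 0 8]))
      (iota 0 5).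

Lemma zsb2P v : size v = size X2 -> zero_sum (mk X2 v) <-> zsb2 v.
Proof.
move=> _; rewrite (zero_sum_mk uniq_X2).
set S := (\sum_(j < size X2) _)%R.
have S_t (t : 'I_5) : S 0%R t =
    ((sumn [seq nth 0 (nth [::] coords2 j) t * nth 0 v j | j <- iota 0 8])%:R)%R.
  rewrite summxE sumnE big_map -[iota 0 8]/(index_iota 0 8) big_mkord natr_sum.
  apply: eq_bigr => j _; have j_lt8 : j < 8 := ltn_ord j.
  by rewrite mulmxnE (nth_map [::]) // mxE natrM mulr_natr.
split=> [S0 | /allP even].
- apply/allP => t; rewrite mem_iota add0n => /andP[_ t5].
  have := S_t (Ordinal t5); rewrite S0 mxE => /esym /Zp_nat_eq0.
  by rewrite modn2 => /(_ isT); case: odd.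
- apply/rowP => t; rewrite S_t mxE; apply/Zp_nat_eq0 => //.
  by have := even t; rewrite mem_iota ltn_ord modn2 => /(_ isT); case: odd.
Qed.

Definition atoms2 : seq (seq nat) :=
 [:: [::1;0;0;0;0;0;0;0]; [::0;2;0;0;0;0;0;0]; [::0;0;2;0;0;0;0;0]; [::0;0;0;2;0;0;0;0];
     [::0;0;0;0;2;0;0;0]; [::0;0;0;0;0;2;0;0]; [::0;0;0;0;0;0;2;0]; [::0;0;0;0;0;0;0;2];
     [::0;1;1;1;1;1;1;0]; [::0;0;1;1;0;0;0;1]; [::0;1;0;0;1;1;1;1]].

Lemma covers2 : covers X2 zsb2 atoms2 [:: 1; 2; 2; 2; 2; 2; 2; 2].
Proof. by vm_compute. Qed.

Lemma atomic2 : atomic_list X2 zsb2 atoms2.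
Proof. by vm_compute. Qed.

(* B(z, k) = 0^z e_0^k e_1^(k+1) e_2^(k+1) e_3^k e_4^k e_5^k (e_1 + e_2). *)
Definition B2 (z k : nat) : fseq 'rV['Z_2]_5 := mk X2 [:: z; k; k.+1; k.+1; k; k; k; 1].

Lemma lengths_B2 z k x :
  in_lengths (B2 z k) x <->
  z + k + 1 <= x <= z + 3 * k + 1 /\ (x - (z + k + 1)) %% 4 < 2.
Proof.
split.
  case/(lengths_lincomb (covers_atoms uniq_X2 zsb2P covers2) (mk_supported _)).
  move=> c [-> e]; move: e; rewrite (mkK uniq_X2) // /total /lincomb /=.
  by case=> *; lia.
move=> x_range.
pose c i := let t := (x - (z + k + 1)) %/ 4 in let r := (x - (z + k + 1)) %% 4 in
  nth 0 [:: z; t; t + r; t + r; t; t; t; 0; k - 2 * t - r; 1 - r; r] i.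
have -> : x = total atoms2 c by rewrite /total /c /=; lia.
have -> : B2 z k = mk X2 (lincomb atoms2 c (size X2)).
  by rewrite /B2 /lincomb /c /=; congr (mk X2 [:: _; _; _; _; _; _; _; _]); lia.
apply: (lincomb_lengths uniq_X2) => a.
exact: (atomic_listP uniq_X2 zsb2P atomic2).
Qed.

Lemma AMP_4_014 (L : nat -> Prop) : is_AMP 4 (pred3 0 1 4) L ->
  exists m M, [/\ m <= M, (M - m) %% 4 < 2 &
                  forall x, L x <-> m <= x <= M /\ (x - m) %% 4 < 2].
Proof.
case=> _ _ _ _ [m [M [_ LM bounds memL]]].
have period x : m <= x ->
    (exists2 d, d \in pred3 0 1 4 & x = m + d %[mod 4]) <-> (x - m) %% 4 < 2.
  move=> mx; split=> [[d] | x_mod].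
    by rewrite !inE => /or3P[] /eqP ->; lia.
  have [r0 | r1] : (x - m) %% 4 = 0 \/ (x - m) %% 4 = 1 by lia.
    by exists 0 => //; lia.
  by exists 1 => //; lia.
have shapeL x : L x <-> m <= x <= M /\ (x - m) %% 4 < 2.
  rewrite memL; split=> -[xmM /period xP]; split=> //; apply/xP; lia.
exists m, M; split=> //; first by case/andP: (bounds M LM).
by case: (shapeL M).1.
Qed.

Theorem proposition3p6 :
  forall L : nat -> Prop,
    in_system_of_sets [the finZmodType of 'Z_6] L ->
    is_AMP 4 (pred3 0 1 4)%N L ->
    in_system_of_sets [the finZmodType of 'rV['Z_2]_5] L.
Proof.
move=> L [B [_ LB]] /AMP_4_014 [m [M [mM M_mod memL]]].
have lengthsB x : in_lengths B x <-> m <= x <= M /\ (x - m) %% 4 < 2.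
  by rewrite -LB memL.
have [m0 | m_gt0] := posnP m.
  (* 0 is a length of B, so L = {0}, the lengths of the empty sequence *)
  have M0 : M = 0.
    by apply: (in_lengths0 (B := B)); apply/lengthsB; lia.
  apply: (system_of_lengths (B := seq_prod [::]) (x := 0)) => [|k].
    by apply/memL; lia.
  by rewrite lengths_empty memL; lia.
have M_bound : M = m \/ M.+1 < 3 * m.
  have [mltM | ] := ltnP m M; last by left; lia.
  by right; apply: (C6_length_bound (B := B)) => //; apply/lengthsB; lia.
pose k := (M - m + 1) %/ 2; have k_def : k = (M - m + 1) %/ 2 by [].
apply: (system_of_lengths (B := B2 (m - k - 1) k) (x := m)) => [|x].
  by apply/memL; lia.
by rewrite memL lengths_B2; lia.
Qed.
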